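(* Let $B$ be a simple Bratteli diagram of rank $d\ge2$ and let $\omega\in\mathcal P_B\cap\mathcal O_B(d)$. Then $(X_B,\varphi_\omega)$ is topologically conjugate to an odometer.
   Context: A Bratteli diagram $B$ has levels $V_n$ ($V_0=\{v_0\}$) and edge sets $E_n$ from $V_{n-1}$ to $V_n$ with source/range maps $s,r$; $X_B$ is its Cantor path space; standing assumption: $B$ aperiodic. $B$ is simple if for every $n$ there is $m>n$ with every vertex of $V_n$ joined by a path to every vertex of $V_m$; rank $d$ means $\sup_n|V_n|<\infty$ and $d$ is the least integer with $|V_n|=d$ infinitely often. An ordering $\omega$ is a linear order on each $r^{-1}(v)$; $\mathcal O_B(j)$ is the set of orderings with exactly $j$ maximal infinite paths. $\omega$ is perfect ($\omega\in\mathcal P_B$) if it admits a Vershik map $\varphi_\omega$: a homeomorphism of $X_B$ mapping maximal infinite paths onto minimal ones and sending each non-maximal $x$ to the path obtained by replacing its first non-maximal edge $x_k$ by its successor $\overline{x_k}$ in $r^{-1}(r(x_k))$ and $(x_1,\dots,x_{k-1})$ by the minimal path from $v_0$ to $s(\overline{x_k})$. A homeomorphism $T$ of a Cantor set $Y$ is an odometer if $(Y,T)$ is minimal and topologically conjugate to a Bratteli–Vershik system of a diagram with exactly one vertex at every level. *)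

From mathcomp Require Import all_boot.
Set Implicit Arguments. Unset Strict Implicit. Unset Printing Implicit Defensive.

(* Level n has vertices 'I_(nV n); the edge set E_{n+1}
   (edges from V_n to V_{n+1}) is 'I_(nE n), with source map [src n] and
   range map [rng n]. *)
Record bratteli := Bratteli {
  nV : nat -> nat;
  nE : nat -> nat;
  src : forall n, 'I_(nE n) -> 'I_(nV n);
  rng : forall n, 'I_(nE n) -> 'I_(nV n.+1);
  nV0 : nV 0 = 1;
  src_surj : forall n (v : 'I_(nV n)), exists e, @src n e = v;
  rng_surj : forall n (v : 'I_(nV n.+1)), exists e, @rng n e = v }.

Arguments src b n e : clear implicits.
Arguments rng b n e : clear implicits.

(* Infinite paths starting at v0: the path space X_B. *)
Definition bpath (B : bratteli) :=
  { x : forall n, 'I_(nE B n) | forall n, rng B n (x n) = src B n.+1 (x n.+1) }.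

Definition pv (B : bratteli) (x : bpath B) (n : nat) : 'I_(nE B n) := sval x n.

(* x and y agree on their first N edges (cylinder neighbourhoods). *)
Definition agree (B : bratteli) (x y : bpath B) (N : nat) : Prop :=
  forall n, n < N -> pv x n = pv y n.

Definition peq (B : bratteli) (x y : bpath B) : Prop := forall n, pv x n = pv y n.

(* continuity for the product (Cantor) topology *)
Definition continuous (B C : bratteli) (f : bpath B -> bpath C) : Prop :=
  forall (x : bpath B) (N : nat), exists M, forall y, agree x y M -> agree (f x) (f y) N.

Definition homeo (B C : bratteli) (f : bpath B -> bpath C) : Prop :=
  exists g : bpath C -> bpath B,
    [/\ continuous f, continuous g,
        (forall x, peq (g (f x)) x) & (forall y, peq (f (g y)) y)].

(* tail equivalence; B aperiodic = every tail equivalence class is infinite *)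
Definition tail_equiv (B : bratteli) (x y : bpath B) : Prop :=
  exists N, forall n, N <= n -> pv x n = pv y n.

Definition aperiodic (B : bratteli) : Prop :=
  forall (x : bpath B) (k : nat) (f : 'I_k -> bpath B),
    exists y, tail_equiv x y /\ forall i, ~ peq (f i) y.

(* conn B n k v w : there is a finite path from vertex v of level n to
   vertex w of level n + k (vertices given by their index). *)
Fixpoint conn (B : bratteli) (n k v w : nat) : Prop :=
  match k with
  | 0 => v = w
  | k'.+1 => exists e : 'I_(nE B n),
      nat_of_ord (src B n e) = v /\ conn B n.+1 k' (rng B n e) w
  end.

Definition simple (B : bratteli) : Prop :=
  forall n, exists m, n < m /\
    forall (v : 'I_(nV B n)) (w : 'I_(nV B m)), conn B n (m - n) v w.

Definition has_rank (B : bratteli) (d : nat) : Prop :=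
  [/\ (exists K, forall n, nV B n <= K),
      (forall N, exists n, N <= n /\ nV B n = d) &
      (forall d', d' < d -> exists N, forall n, N <= n -> nV B n <> d')].

(* An ordering: a (strict) linear order on each r^{-1}(v). *)
Record ordering (B : bratteli) := Ordering {
  olt : forall n, rel 'I_(nE B n);
  olt_fiber : forall n e e', @olt n e e' -> rng B n e = rng B n e';
  olt_irr : forall n e, ~~ @olt n e e;
  olt_trans : forall n e1 e2 e3, @olt n e1 e2 -> @olt n e2 e3 -> @olt n e1 e3;
  olt_total : forall n e e', rng B n e = rng B n e' -> e != e' ->
                 @olt n e e' || @olt n e' e }.
Arguments olt B o n e e' : clear implicits.

Section Ord.
Variables (B : bratteli) (o : ordering B).

Definition is_max n (e : 'I_(nE B n)) : Prop := forall e', ~~ olt B o n e e'.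
Definition is_min n (e : 'I_(nE B n)) : Prop := forall e', ~~ olt B o n e' e.
Definition max_path (x : bpath B) : Prop := forall n, is_max (pv x n).
Definition min_path (x : bpath B) : Prop := forall n, is_min (pv x n).

Definition is_succ n (e e' : 'I_(nE B n)) : Prop :=
  olt B o n e e' /\ forall e'', ~~ (olt B o n e e'' && olt B o n e'' e').

Definition n_max_paths (j : nat) : Prop :=
  exists f : 'I_j -> bpath B,
    [/\ (forall i, max_path (f i)),
        (forall i i', peq (f i) (f i') -> i = i') &
        (forall x, max_path x -> exists i, peq x (f i))].

Definition vershik_step (x y : bpath B) : Prop :=
  exists k,
    [/\ (forall i, i < k -> is_max (pv x i)),
        ~ is_max (pv x k),
        is_succ (pv x k) (pv y k),
        (forall i, k < i -> pv y i = pv x i) &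
        (forall i, i < k -> is_min (pv y i))].

Definition is_vershik (phi : bpath B -> bpath B) : Prop :=
  [/\ homeo phi,
      (forall x, max_path x -> min_path (phi x)),
      (forall y, min_path y -> exists x, max_path x /\ peq (phi x) y) &
      (forall x, ~ max_path x -> vershik_step x (phi x))].

Definition perfect : Prop := exists phi, is_vershik phi.

End Ord.

Definition minimal (B : bratteli) (T : bpath B -> bpath B) : Prop :=
  forall (x y : bpath B) (N : nat), exists k, agree (iter k T x) y N.

Definition conjugate (B C : bratteli) (T : bpath B -> bpath B) (S : bpath C -> bpath C) : Prop :=
  exists h : bpath B -> bpath C, homeo h /\ forall x, peq (h (T x)) (S (h x)).

Definition odometer (C : bratteli) (S : bpath C -> bpath C) : Prop :=
  [/\ minimal S, (forall n, nV C n = 1) & exists o : ordering C, is_vershik o S].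

Definition conj_to_odometer (B : bratteli) (T : bpath B -> bpath B) : Prop :=
  exists (C : bratteli) (S : bpath C -> bpath C), odometer S /\ conjugate T S.

(* Cut X_B at a level L with exactly d vertices, so deep that the d
   maximal (resp. minimal) paths pass through pairwise distinct vertices of
   V_L and that phi maps paths agreeing with a maximal path up to level L to
   paths agreeing with its image up to that level.  Then every vertex of V_L
   is the top of exactly one maximal path and the bottom of exactly one
   minimal path, and phi maps the top of the tower over v onto the bottom of
   the tower over rho v for a permutation rho of V_L.  Simplicity forces rho
   to be a single cycle, so the d towers stack into one tower of height H_L
   on which phi acts as x |-> x+1.
   Doing this along infinitely many such levels gives nested positions mod H_n
   which identify (X_B, phi) with the odometer of heights H_n. *)
From mathcomp Require Import all_boot zify.
From Stdlib Require Import FunctionalExtensionality Classical.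
Set Implicit Arguments. Unset Strict Implicit. Unset Printing Implicit Defensive.

Lemma peq_eq (B : bratteli) (x y : bpath B) : peq x y -> x = y.
Proof.
case: x y => [x px] [y py] exy.
have eq_xy : x = y by apply: functional_extensionality_dep => n; exact: exy n.
subst y; have -> // : px = py.
by apply: functional_extensionality_dep => n; exact: eq_irrelevance.
Qed.

Lemma bpathP (B : bratteli) (x : bpath B) n :
  rng B n (pv x n) = src B n.+1 (pv x n.+1).
Proof. exact: (proj2_sig x n). Qed.

Lemma agree_le (B : bratteli) (x y : bpath B) a b :
  a <= b -> agree x y b -> agree x y a.
Proof. by move=> ab E n na; apply: E; exact: leq_trans na ab. Qed.

Lemma agree_sym (B : bratteli) (x y : bpath B) a : agree x y a -> agree y x a.
Proof. by move=> E n na; rewrite E. Qed.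

Lemma agree_trans (B : bratteli) (x y z : bpath B) a :
  agree x y a -> agree y z a -> agree x z a.
Proof. by move=> E F n na; rewrite E // F. Qed.

Lemma neq_disagree (B : bratteli) (x y : bpath B) : x <> y -> exists N, ~ agree x y N.
Proof.
move=> ne; apply: NNPP => all_agree; apply: ne; apply: peq_eq => n.
apply: NNPP => ne_n; apply: all_agree; exists n.+1 => a; apply: ne_n.
exact: a.
Qed.

Definition vtxo (B : bratteli) n (x : bpath B) : 'I_(nV B n) := src B n (pv x n).

Lemma vtxo_S (B : bratteli) N (x : bpath B) : vtxo N.+1 x = rng B N (pv x N).
Proof. by rewrite /vtxo bpathP. Qed.

Lemma agree_vtxo (B : bratteli) N (x y : bpath B) :
  0 < N -> agree x y N -> vtxo N x = vtxo N y.
Proof. by case: N => [//|N] _ a; rewrite !vtxo_S a. Qed.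

Lemma fin_uniform_bound (I : finType) (P : I -> nat -> Prop) :
  (forall i N N', N <= N' -> P i N -> P i N') -> (forall i, exists N, P i N) ->
  exists N, forall i, P i N.
Proof.
move=> mono ex.
suff : forall s : seq I, exists N, forall i, i \in s -> P i N.
  by case/(_ (enum I)) => N hN; exists N => i; apply: hN; rewrite mem_enum.
elim=> [|a s [N h]]; first by exists 0.
have [Na ha] := ex a.
exists (maxn N Na) => i; rewrite inE => /orP[/eqP->|/h].
- by apply: mono ha; exact: leq_maxr.
- by apply: mono; exact: leq_maxl.
Qed.

Lemma sum_sub (I : finType) (P Q : pred I) (F : I -> nat) :
  (forall i, P i -> Q i) -> \sum_(i | P i) F i <= \sum_(i | Q i) F i.
Proof. exact: (sub_le_big (fun n => leqnn n) (fun m n => leq_addr n m)). Qed.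

Lemma sum_prefix (F : nat -> nat) a b :
  a <= b -> \sum_(t < a) F t <= \sum_(t < b) F t.
Proof. by move=> ab; rewrite -!(big_mkord xpredT) (big_cat_nat (leq0n a) ab) leq_addr. Qed.

Lemma digit_lt a b p h : p < h -> a < b -> p + a * h < b * h.
Proof. nia. Qed.

Lemma digit_top a b p h :
  p < h -> a < b -> (p + a * h).+1 = b * h -> a = b.-1 /\ p.+1 = h.
Proof. by move=> ph ab e; split; nia. Qed.

(* The last position mod a * b has last digits in both radices. *)
Lemma pred_mul a b : 0 < a -> 0 < b -> (a * b).-1 = a.-1 * b + b.-1.
Proof. by move=> a0 b0; rewrite -(prednK a0) -(prednK b0) /=; lia. Qed.

(* The odometer with heights H: the one-vertex diagram with H (n+1) / H n
   edges at level n.  A path c is read as the mixed-radix number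
   [odo_pos n c = sum_(i < n) c_i * H i] in [0, H n), and the Vershik map is
   "add one with carry". *)
Section Odometer.
Variable H : nat -> nat.
Hypotheses (H0 : H 0 = 1) (H_pos : forall n, 0 < H n)
  (H_dvd : forall n, H n %| H n.+1).

Definition hratio n := H n.+1 %/ H n.

Lemma H_succ n : H n.+1 = hratio n * H n.
Proof. by rewrite /hratio divnK. Qed.

Lemma hratio_pos n : 0 < hratio n.
Proof. by have := H_pos n.+1; rewrite H_succ; case: (hratio n). Qed.

Lemma H_dvd_le n m : n <= m -> H n %| H m.
Proof.
elim: m => [|m IH]; first by rewrite leqn0 => /eqP->.
rewrite leq_eqVlt => /orP[/eqP->//|]; rewrite ltnS => /IH h.
exact: dvdn_trans h (H_dvd m).
Qed.

Definition odo : bratteli.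
refine (@Bratteli (fun _ => 1) hratio (fun n _ => ord0) (fun n _ => ord0) erefl _ _).
- by move=> n v; exists (Ordinal (hratio_pos n)); rewrite (ord1 v).
- by move=> n v; exists (Ordinal (hratio_pos n)); rewrite (ord1 v).
Defined.

Definition odo_pos n (c : bpath odo) := \sum_(i < n) (pv c i : nat) * H i.

Lemma odo_pos0 c : odo_pos 0 c = 0.
Proof. by rewrite /odo_pos big_ord0. Qed.

Lemma odo_pos_S n c : odo_pos n.+1 c = odo_pos n c + pv c n * H n.
Proof. by rewrite /odo_pos big_ord_recr. Qed.

Lemma odo_pos_lt n c : odo_pos n c < H n.
Proof.
elim: n => [|n IH]; first by rewrite odo_pos0 H_pos.
by rewrite odo_pos_S H_succ digit_lt.
Qed.

Lemma odo_pos_div n c : odo_pos n.+1 c %/ H n = pv c n.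
Proof. by rewrite odo_pos_S addnC divnMDl // divn_small ?addn0 // odo_pos_lt. Qed.

Lemma odo_pos_mod n m c : n <= m -> odo_pos m c %% H n = odo_pos n c.
Proof.
elim: m => [|m IH]; first by rewrite leqn0 => /eqP->; rewrite modn_small // odo_pos_lt.
rewrite leq_eqVlt => /orP[/eqP->|]; first by rewrite modn_small // odo_pos_lt.
rewrite ltnS => nm; rewrite odo_pos_S.
by have /dvdnP[k ->] := H_dvd_le nm; rewrite mulnA addnC modnMDl IH.
Qed.

Lemma agree_odo_pos N n c c' : agree c c' N -> n <= N -> odo_pos n c = odo_pos n c'.
Proof.
move=> E nN; apply: eq_bigr => i _; rewrite E //.
exact: leq_trans (ltn_ord i) nN.
Qed.

Lemma odo_pos_agree N c c' : odo_pos N c = odo_pos N c' -> agree c c' N.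
Proof.
elim: N => [|N IH] e; first by [].
have eN : odo_pos N c = odo_pos N c' by rewrite -!(@odo_pos_mod N N.+1) ?e.
move=> i; rewrite ltnS leq_eqVlt => /orP[/eqP->|]; last exact: IH.
by apply: val_inj; rewrite /= -!odo_pos_div e.
Qed.

Lemma odo_pos_inj c c' : (forall n, odo_pos n c = odo_pos n c') -> c = c'.
Proof. by move=> e; apply: peq_eq => n; exact: (odo_pos_agree (e n.+1)). Qed.

(* The path whose positions are given by a compatible sequence F mod H n. *)
Lemma odo_of_pos_lt (F : nat -> nat) n : (F n.+1 %% H n.+1) %/ H n < hratio n.
Proof. by rewrite ltn_divLR // -H_succ ltn_mod. Qed.

Definition odo_of_pos (F : nat -> nat) : bpath odo :=
  exist _ (fun n => Ordinal (odo_of_pos_lt F n)) (fun n => erefl).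

Lemma odo_pos_of F : (forall n, F n.+1 %% H n = F n %% H n) ->
  forall n, odo_pos n (odo_of_pos F) = F n %% H n.
Proof.
move=> hF; elim=> [|n IH]; first by rewrite odo_pos0 H0 modn1.
rewrite odo_pos_S IH /=.
have ea : F n.+1 %% H n.+1 %% H n = F n %% H n by rewrite modn_dvdm.
by rewrite -ea addnC -divn_eq.
Qed.

Definition odo_succ (c : bpath odo) := odo_of_pos (fun n => odo_pos n c + 1).
Definition odo_pred (c : bpath odo) := odo_of_pos (fun n => odo_pos n c + (H n).-1).

Lemma odo_pos_succ n c : odo_pos n (odo_succ c) = (odo_pos n c + 1) %% H n.
Proof. by apply: odo_pos_of => m; rewrite -modnDml odo_pos_mod. Qed.

(* The last position at level n+1 ends with the last position at level n. *)
Lemma H_pred n : (H n.+1).-1 = (hratio n).-1 * H n + (H n).-1.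
Proof.
by rewrite H_succ pred_mul ?hratio_pos.
Qed.

Lemma odo_pos_pred n c : odo_pos n (odo_pred c) = (odo_pos n c + (H n).-1) %% H n.
Proof.
apply: odo_pos_of => m; rewrite H_pred addnCA modnMDl.
by rewrite -modnDml odo_pos_mod.
Qed.

Lemma odo_succK c : odo_succ (odo_pred c) = c.
Proof.
apply: odo_pos_inj => n; rewrite odo_pos_succ odo_pos_pred modnDml -addnA addn1.
by rewrite prednK // modnDr modn_small // odo_pos_lt.
Qed.

Lemma odo_predK c : odo_pred (odo_succ c) = c.
Proof.
apply: odo_pos_inj => n; rewrite odo_pos_pred odo_pos_succ modnDml -addnA add1n.
by rewrite prednK // modnDr modn_small // odo_pos_lt.
Qed.

Lemma odo_succ_homeo : homeo odo_succ.
Proof.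
exists odo_pred; split => [c N|c N|c|c]; last 2 first.
- by rewrite odo_predK.
- by rewrite odo_succK.
- by exists N => c' E; apply: odo_pos_agree; rewrite !odo_pos_succ (agree_odo_pos E).
- by exists N => c' E; apply: odo_pos_agree; rewrite !odo_pos_pred (agree_odo_pos E).
Qed.

Lemma odo_pos_iter n k c : odo_pos n (iter k odo_succ c) = (odo_pos n c + k) %% H n.
Proof.
elim: k => [|k IH]; first by rewrite addn0 modn_small // odo_pos_lt.
by rewrite iterS odo_pos_succ IH modnDml addn1 addnS.
Qed.

Lemma odo_minimal : minimal odo_succ.
Proof.
move=> c c' N; exists (odo_pos N c' + (H N - odo_pos N c)).
apply: odo_pos_agree; rewrite odo_pos_iter addnCA subnKC ?(ltnW (odo_pos_lt _ _)) //.
by rewrite addnC modnDl modn_small // odo_pos_lt.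
Qed.

Definition odo_order : ordering odo.
refine (@Ordering odo (fun n (e e' : 'I_(hratio n)) => (e : nat) < e') _ _ _ _).
- by [].
- by move=> n e; rewrite ltnn.
- by move=> n e1 e2 e3 h1 h2; exact: ltn_trans h1 h2.
- by move=> n e e' _; rewrite -neq_ltn.
Defined.

Lemma odo_max n (e : 'I_(hratio n)) : is_max odo_order e <-> (e : nat) = (hratio n).-1.
Proof.
have top : (hratio n).-1 < hratio n by rewrite prednK ?hratio_pos.
split => [h|h e']; last by rewrite /= -leqNgt h -ltnS prednK ?hratio_pos.
have := h (Ordinal top); rewrite /= -leqNgt => le.
have le2 : (e : nat) <= (hratio n).-1 by rewrite -ltnS prednK ?hratio_pos.
by apply/eqP; rewrite eqn_leq le2 le.
Qed.

Lemma odo_min n (e : 'I_(hratio n)) : is_min odo_order e <-> (e : nat) = 0.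
Proof.
split => [h|h e']; last by rewrite /= h.
by have := h (Ordinal (hratio_pos n)); rewrite /= -leqNgt leqn0 => /eqP.
Qed.

Lemma odo_pos_top n c :
  (forall i, i < n -> (pv c i : nat) = (hratio i).-1) <-> (odo_pos n c).+1 = H n.
Proof.
split.
- elim: n => [|n IH] h; first by rewrite odo_pos0 H0.
  rewrite odo_pos_S H_succ h // -addSn IH => [|i ilt]; last by apply: h; exact: ltnW.
  by have := hratio_pos n; case: (hratio n) => // a _ /=; rewrite mulSn.
- elim: n => [|n IH] e i //.
  rewrite odo_pos_S H_succ in e.
  have [e1 e2] := digit_top (odo_pos_lt n c) (ltn_ord (pv c n)) e.
  by rewrite ltnS leq_eqVlt => /orP[/eqP->//|]; exact: IH.
Qed.

Lemma odo_pos_base n c : (forall i, i < n -> (pv c i : nat) = 0) <-> odo_pos n c = 0.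
Proof.
split => [h|]; first by rewrite /odo_pos big1 // => i _; rewrite h.
elim: n => [|n IH] e i //; move: e; rewrite odo_pos_S => /eqP.
rewrite addn_eq0 => /andP[/eqP e1 e2].
rewrite ltnS leq_eqVlt => /orP[/eqP->|]; last exact: IH.
by move: e2; rewrite muln_eq0 (gtn_eqF (H_pos n)) orbF => /eqP.
Qed.

Lemma odo_not_top k n c :
  k < n -> (pv c k : nat) != (hratio k).-1 -> (odo_pos n c).+1 < H n.
Proof.
move=> kn ne; have := odo_pos_lt n c; rewrite leq_eqVlt => /orP[/eqP e|//].
by move/odo_pos_top: e => /(_ k kn) e; rewrite e eqxx in ne.
Qed.

Lemma odo_max_path c : max_path odo_order c <-> forall n, (odo_pos n c).+1 = H n.
Proof.
split => [hc n|hc n]; first by apply/odo_pos_top => i _; apply/odo_max.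
by apply/odo_max; apply: (proj2 (odo_pos_top n.+1 c) (hc n.+1)).
Qed.

Lemma odo_succ_step c : ~ max_path odo_order c -> vershik_step odo_order c (odo_succ c).
Proof.
move=> hc.
have exP : exists k, (pv c k : nat) != (hratio k).-1.
  apply: NNPP => hn; apply: hc => n; apply/odo_max; apply/eqP.
  by apply: negbNE; apply/negP => h; apply: hn; exists n.
case: (ex_minnP exP) => k Pk mink.
have below : forall i, i < k -> (pv c i : nat) = (hratio i).-1.
  move=> i ik; apply/eqP; apply: negbNE; apply/negP => Pi.
  by have := mink i Pi; rewrite leqNgt ik.
have tk : (odo_pos k c).+1 = H k by apply/odo_pos_top.
have ck : (pv c k : nat).+1 < hratio k.
  have : (pv c k : nat) <= (hratio k).-1 by rewrite -ltnS prednK ?hratio_pos.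
  rewrite leq_eqVlt => /orP[/eqP e|]; first by rewrite e eqxx in Pk.
  by rewrite -ltnS prednK ?hratio_pos.
have succ_k : (pv (odo_succ c) k : nat) = (pv c k).+1.
  rewrite /= odo_pos_S addnAC addn1 tk -mulSn modn_small; first by rewrite mulnK.
  by rewrite H_succ ltn_mul2r H_pos ck.
exists k; split.
- by move=> i ik; apply/odo_max; apply: below.
- by move/odo_max => e; rewrite e eqxx in Pk.
- split => [|e'']; first by change ((pv c k : nat) < pv (odo_succ c) k); rewrite succ_k.
  change (~~ (((pv c k : nat) < e'') && ((e'' : nat) < pv (odo_succ c) k))).
  by rewrite succ_k ltnS; apply/negP => /andP[h1 h2]; have := leq_trans h1 h2; rewrite ltnn.
- move=> i ki; apply: val_inj => /=.
  rewrite modn_small; last by rewrite addn1; apply: (odo_not_top (k := k)) => //; exact: ltnW.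
  rewrite odo_pos_S addnAC addnC divnMDl // divn_small ?addn0 // addn1.
  exact: (odo_not_top (k := k)).
- move=> i ik; apply/odo_min => /=.
  have t : (odo_pos i.+1 c).+1 = H i.+1.
    by apply/odo_pos_top => j ji; apply: below; exact: leq_trans ji ik.
  by rewrite addn1 t modnn div0n.
Qed.

Lemma odo_vershik : is_vershik odo_order odo_succ.
Proof.
split.
- exact: odo_succ_homeo.
- move=> c /odo_max_path hc n; apply/odo_min.
  by rewrite /= addn1 hc modnn div0n.
- move=> y hy; set top := odo_of_pos (fun n => (H n).-1).
  have top_pos m : odo_pos m top = (H m).-1.
    by rewrite odo_pos_of ?modn_small ?prednK // => n; rewrite H_pred modnMDl.
  exists top; split; first by apply/odo_max_path => m; rewrite top_pos prednK.
  move=> n; congr (pv _ n); apply: odo_pos_inj => m.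
  rewrite odo_pos_succ top_pos addn1 prednK // modnn.
  by apply/esym/odo_pos_base => i _; apply/odo_min.
- exact: odo_succ_step.
Qed.

Lemma odo_odometer : odometer odo_succ.
Proof. by split; [exact: odo_minimal | by [] | exists odo_order; exact: odo_vershik]. Qed.

End Odometer.

(* Suppose T is onto (with right inverse Ti) and there
   are heights H n, cylinder depths K n and positions [pos n x] in [0, H n)
   such that T adds one to every position mod H n, [pos n] is determined by
   the first K n edges and in turn determines them, and some point xs has all
   positions 0.  Then x |-> (pos n x)_n conjugates T with the odometer of
   heights H. *)
Section ConjugacyCriterion.
Variables (B : bratteli) (T Ti : bpath B -> bpath B) (H K : nat -> nat)
  (pos : nat -> bpath B -> nat) (xs : bpath B).
Hypotheses (T_Ti : forall x, T (Ti x) = x) (H0 : H 0 = 1)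
  (H_pos : forall n, 0 < H n) (pos_lt : forall n x, pos n x < H n)
  (pos_T : forall n x, pos n (T x) = (pos n x + 1) %% H n)
  (pos_loc : forall n x y, agree x y (K n) -> pos n x = pos n y)
  (pos_inj : forall n x y, pos n x = pos n y -> agree x y (K n))
  (pos_xs : forall n, pos n xs = 0)
  (K_mono : forall n, K n <= K n.+1) (K_ge : forall n, n <= K n).

Lemma pos_iter n x j : pos n (iter j T x) = (pos n x + j) %% H n.
Proof.
elim: j => [|j IH]; first by rewrite addn0 modn_small.
by rewrite iterS pos_T IH modnDml addn1 addnS.
Qed.

Lemma iter_T_Ti j x : iter j T (iter j Ti x) = x.
Proof. by elim: j => [//|j IH]; rewrite [iter j.+1 Ti x]iterS iterSr T_Ti. Qed.

Lemma pos_zero_down n y : pos n.+1 y = 0 -> pos n y = 0.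
Proof.
move=> h; have := pos_inj (etrans h (esym (pos_xs n.+1))).
by move/(agree_le (K_mono n))/pos_loc->; rewrite pos_xs.
Qed.

Lemma pos_mod n x : pos n.+1 x %% H n = pos n x.
Proof.
set j := pos n.+1 x; set y := iter j Ti x.
have hx : x = iter j T y by rewrite iter_T_Ti.
have y0 : pos n.+1 y = 0.
  have := pos_iter n.+1 y j; rewrite -hx -/j => e.
  have : (pos n.+1 y + j == 0 + j %[mod H n.+1]).
    by rewrite -e add0n !modn_small // ?pos_lt.
  by rewrite eqn_modDr mod0n modn_small ?pos_lt // => /eqP.
by rewrite hx pos_iter (pos_zero_down y0) add0n.
Qed.

(* The heights divide each other: the point iter (H (n+1)) T xs has position 0
   at level n+1, hence at level n. *)
Lemma pos_H_dvd n : H n %| H n.+1.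
Proof.
have e : pos n.+1 (iter (H n.+1) T xs) = 0 by rewrite pos_iter pos_xs add0n modnn.
have := pos_zero_down e; rewrite pos_iter pos_xs add0n => h.
by apply/dvdnP; exists (H n.+1 %/ H n); rewrite divnK // /dvdn h.
Qed.

Local Notation C := (odo H_pos pos_H_dvd).

Definition code (x : bpath B) : bpath C :=
  odo_of_pos H_pos pos_H_dvd (fun n => pos n x).

Lemma odo_pos_code n x : odo_pos n (code x) = pos n x.
Proof. by rewrite odo_pos_of ?modn_small // => m; rewrite pos_mod modn_small. Qed.

(* The inverse of [code] reads its first K n edges off the orbit point of xs
   with the prescribed level-n position. *)
Definition orbit_pt p := iter p T xs.

Lemma pos_orbit_pt n p : pos n (orbit_pt p) = p %% H n.
Proof. by rewrite /orbit_pt pos_iter pos_xs. Qed.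

Lemma orbit_pt_agree (c : bpath C) a b :
  a <= b -> agree (orbit_pt (odo_pos a c)) (orbit_pt (odo_pos b c)) (K a).
Proof.
move=> ab; apply: pos_inj; rewrite !pos_orbit_pt (odo_pos_mod c ab).
by rewrite modn_small // odo_pos_lt.
Qed.

(* The orbit points for the levels m+1 and m+2 agree up to K (m+1) > m,
   so their edges at levels m and m+1 are composable. *)
Lemma decode_path (c : bpath C) m : rng B m (pv (orbit_pt (odo_pos m.+1 c)) m) =
  src B m.+1 (pv (orbit_pt (odo_pos m.+2 c)) m.+1).
Proof. by rewrite (orbit_pt_agree c (leqnSn m.+1) (n := m)) ?bpathP. Qed.

Definition decode (c : bpath C) : bpath B :=
  exist _ (fun m => pv (orbit_pt (odo_pos m.+1 c)) m) (decode_path c).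

Lemma decode_agree c n : agree (decode c) (orbit_pt (odo_pos n c)) (K n).
Proof.
move=> i iK; rewrite /pv /= -/(pv (orbit_pt (odo_pos i.+1 c)) i).
rewrite -/(pv (orbit_pt (odo_pos n c)) i).
case: (leqP i.+1 n) => hi; first by apply: (orbit_pt_agree c hi); exact: K_ge.
by apply/esym; apply: (orbit_pt_agree c); [exact: ltnW | exact: iK].
Qed.

Lemma pos_decode n c : pos n (decode c) = odo_pos n c.
Proof.
by rewrite (@pos_loc n _ _ (@decode_agree c n)) pos_orbit_pt modn_small // odo_pos_lt.
Qed.

Lemma code_homeo : homeo code.
Proof.
exists decode; split.
- move=> x N; exists (K N) => y E; apply: odo_pos_agree.
  by rewrite !odo_pos_code; apply: pos_loc.
- move=> c N; exists N => c' E i iN; rewrite /pv /=.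
  by rewrite (agree_odo_pos E iN).
- move=> x m; rewrite /pv /= -/(pv (orbit_pt (odo_pos m.+1 (code x))) m) odo_pos_code.
  by apply: (pos_inj (n := m.+1)); [rewrite pos_orbit_pt modn_small | exact: K_ge].
- by move=> c n; congr (pv _ n); apply: odo_pos_inj => m; rewrite odo_pos_code pos_decode.
Qed.

Theorem conj_odometer_of_positions : conj_to_odometer T.
Proof.
exists C, (odo_succ (H_pos := H_pos) (H_dvd := pos_H_dvd)); split.
  exact: odo_odometer.
exists code; split; first exact: code_homeo.
move=> x n; congr (pv _ n); apply: odo_pos_inj => m.
by rewrite odo_pos_code pos_T (odo_pos_succ H0) odo_pos_code.
Qed.

End ConjugacyCriterion.

(* Kakutani-Rokhlin towers of an ordered diagram.  [height v] is the number
   of finite paths from v0 to v; [offset e] counts the paths into r(e) that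
   enter through an edge smaller than e; [tower_pos N x] is the rank of the
   initial segment of x of length N among all paths to [vtxo N x]. *)
Section Towers.
Variables (B : bratteli) (o : ordering B).

Fixpoint height (n : nat) : 'I_(nV B n) -> nat :=
  match n return 'I_(nV B n) -> nat with
  | 0 => fun _ => 1
  | n'.+1 => fun w => \sum_(e : 'I_(nE B n') | rng B n' e == w) height (src B n' e)
  end.

Lemma height_S n w :
  height w = \sum_(e : 'I_(nE B n) | rng B n e == w) height (src B n e).
Proof. by []. Qed.

Definition offset n (e : 'I_(nE B n)) := \sum_(e' | olt B o n e' e) height (src B n e').

Lemma offset_add n (e : 'I_(nE B n)) : offset e + height (src B n e) =
  \sum_(e' | olt B o n e' e || (e' == e)) height (src B n e').
Proof.
rewrite [RHS](bigD1 e) ?eqxx ?orbT //= addnC; congr (_ + _); apply: eq_bigl => e'.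
case: (eqVneq e' e) => [->|ne]; first by rewrite (negbTE (olt_irr o e)).
by rewrite orbF andbT.
Qed.

Lemma offset_le n (e : 'I_(nE B n)) : offset e + height (src B n e) <= height (rng B n e).
Proof. by rewrite offset_add height_S; apply: sum_sub => e' /orP[/olt_fiber->|/eqP->]. Qed.

Lemma offset_max n (e : 'I_(nE B n)) :
  is_max o e -> offset e + height (src B n e) = height (rng B n e).
Proof.
move=> me; rewrite offset_add height_S; apply: eq_bigl => e'.
case: (eqVneq e' e) => [->|ne]; first by rewrite orbT eqxx.
rewrite orbF; apply/idP/idP => [/olt_fiber->//|/eqP hr].
by have := olt_total o hr ne; rewrite (negbTE (me e')) orbF.
Qed.

Lemma offset_min n (e : 'I_(nE B n)) : is_min o e -> offset e = 0.
Proof. by move=> me; rewrite /offset big1 // => e' h; have := me e'; rewrite h. Qed.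

Lemma offset_succ n (e e' : 'I_(nE B n)) :
  is_succ o e e' -> offset e' = offset e + height (src B n e).
Proof.
case=> lt nb; rewrite offset_add; apply: eq_bigl => f.
case: (eqVneq f e) => [->|ne]; first by rewrite lt orbT.
rewrite orbF; apply/idP/idP => [h|h]; last exact: olt_trans h lt.
have hr : rng B n f = rng B n e by rewrite (olt_fiber h) (olt_fiber lt).
by case/orP: (olt_total o hr ne) => // h2; have := nb f; rewrite h2 h.
Qed.

Lemma offset_gt n (e e' : 'I_(nE B n)) :
  olt B o n e e' -> offset e + height (src B n e) <= offset e'.
Proof.
move=> lt; rewrite offset_add; apply: sum_sub => f /orP[h|/eqP->//].
exact: olt_trans h lt.
Qed.

Definition tower_pos N (x : bpath B) := \sum_(i < N) offset (pv x i).
Definition is_top N (x : bpath B) := forall i, i < N -> is_max o (pv x i).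
Definition is_base N (x : bpath B) := forall i, i < N -> is_min o (pv x i).

Lemma tower_pos0 x : tower_pos 0 x = 0.
Proof. by rewrite /tower_pos big_ord0. Qed.

Lemma tower_pos_S N x : tower_pos N.+1 x = tower_pos N x + offset (pv x N).
Proof. by rewrite /tower_pos big_ord_recr. Qed.

Lemma tower_pos_lt N x : tower_pos N x < height (vtxo N x).
Proof.
elim: N => [|N IH]; first by rewrite tower_pos0.
rewrite tower_pos_S vtxo_S; apply: leq_trans (offset_le _).
by rewrite addnC ltn_add2l.
Qed.

Lemma tower_pos_top N x : is_top N x -> (tower_pos N x).+1 = height (vtxo N x).
Proof.
elim: N => [|N IH] t; first by rewrite tower_pos0.
rewrite tower_pos_S vtxo_S -offset_max; last exact: t.
have tN : is_top N x by move=> i iN; apply: t; exact: ltnW.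
by rewrite -addSn (IH tN) addnC.
Qed.

Lemma tower_pos_base N x : is_base N x -> tower_pos N x = 0.
Proof. by move=> b; rewrite /tower_pos big1 // => i _; apply: offset_min; exact: b. Qed.

Lemma tower_pos_agree N x y : agree x y N -> tower_pos N x = tower_pos N y.
Proof. by move=> E; apply: eq_bigr => i _; rewrite E. Qed.

Lemma tower_pos_inj N x y :
  vtxo N x = vtxo N y -> tower_pos N x = tower_pos N y -> agree x y N.
Proof.
elim: N => [|N IH] ev er; first by [].
move: ev er; rewrite !vtxo_S !tower_pos_S => ev er.
have key a b : olt B o N (pv a N) (pv b N) ->
    tower_pos N a + offset (pv a N) < tower_pos N b + offset (pv b N).
  move=> lt; apply: leq_trans (leq_addl _ _); apply: leq_trans (offset_gt lt).
  by rewrite addnC -addnS leq_add2l tower_pos_lt.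
have exy : pv x N = pv y N.
  apply/eqP; apply: contraT => ne.
  by case/orP: (olt_total o ev ne) => /key; rewrite er ltnn.
have ev' : vtxo N x = vtxo N y by rewrite /vtxo exy.
move: er; rewrite exy => /addIn er.
by move=> i; rewrite ltnS leq_eqVlt => /orP[/eqP->//|]; exact: IH.
Qed.

Lemma top_agree N x y : is_top N x -> is_top N y -> vtxo N x = vtxo N y -> agree x y N.
Proof.
move=> tx ty ev; apply: tower_pos_inj => //.
by apply: succn_inj; rewrite !tower_pos_top // ev.
Qed.

Lemma base_agree N x y :
  is_base N x -> is_base N y -> vtxo N x = vtxo N y -> agree x y N.
Proof. by move=> bx by' ev; apply: tower_pos_inj => //; rewrite !tower_pos_base. Qed.

Lemma step_tower_pos x y k :
  (forall i, i < k -> is_max o (pv x i)) -> is_succ o (pv x k) (pv y k) ->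
  (forall i, k < i -> pv y i = pv x i) -> (forall i, i < k -> is_min o (pv y i)) ->
  forall N, k < N -> tower_pos N y = (tower_pos N x).+1.
Proof.
move=> mx sc eq mn; elim=> [//|N IH]; rewrite ltnS leq_eqVlt => /orP[/eqP<-|kN].
- rewrite !tower_pos_S (tower_pos_base mn) add0n (offset_succ sc) -addSn.
  by rewrite (tower_pos_top mx) addnC.
- by rewrite !tower_pos_S IH // eq.
Qed.

Variable (phi : bpath B -> bpath B).
Hypothesis phi_vershik : is_vershik o phi.

Lemma vershik_not_top N x : ~ is_top N x ->
  vtxo N (phi x) = vtxo N x /\ tower_pos N (phi x) = (tower_pos N x).+1.
Proof.
move=> nt; case: phi_vershik => _ _ _ st.
have nm : ~ max_path o x by move=> m; apply: nt => i _; exact: m.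
have [k [mx nmk sc eqk mn]] := st x nm.
have kN : k < N.
  rewrite ltnNge; apply/negP => Nk; apply: nt => i iN; apply: mx.
  exact: leq_trans iN Nk.
by split; [rewrite /vtxo eqk | exact: (step_tower_pos mx sc eqk mn kN)].
Qed.

Lemma top_of_tower_pos N x : (tower_pos N x).+1 = height (vtxo N x) -> is_top N x.
Proof.
move=> e; apply: NNPP => nt; have [e1 e2] := vershik_not_top nt.
by have := tower_pos_lt N (phi x); rewrite e1 e2 e ltnn.
Qed.

Lemma vershik_top N x : is_top N x -> is_base N (phi x).
Proof.
move=> t; case: phi_vershik => _ mm _ st.
case: (classic (max_path o x)) => [m|nm]; first by move=> i _; exact: mm x m i.
have [k [mx nmk sc eqk mn]] := st x nm.
move=> i iN; apply: mn; rewrite ltnNge; apply/negP => ki.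
by apply: nmk; apply: t; exact: leq_ltn_trans ki iN.
Qed.

End Towers.

Section Extension.
Variable B : bratteli.

Lemma next_edge_ex n (u : 'I_(nV B n)) : exists e : 'I_(nE B n), src B n e == u.
Proof. by have [e he] := src_surj u; exists e; apply/eqP. Qed.

Definition next_edge n (u : 'I_(nV B n)) : 'I_(nE B n) := xchoose (next_edge_ex u).

Lemma next_edge_src n (u : 'I_(nV B n)) : src B n (next_edge u) = u.
Proof. exact/eqP/(xchooseP (next_edge_ex u)). Qed.

Section Reroute.
Variables (z : bpath B) (n : nat) (e : 'I_(nE B n)).
Hypothesis e_src : src B n e = vtxo n z.

(* e at level n (as an edge of level j = n), the edges of z elsewhere. *)
Definition edge_at j : 'I_(nE B j) := if j == n then insubd (pv z j) e else pv z j.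

Lemma insubd_e : insubd (pv z n) e = e.
Proof. by apply: val_inj; rewrite val_insubd ltn_ord. Qed.

Lemma edge_at_n : edge_at n = e.
Proof. by rewrite /edge_at eqxx insubd_e. Qed.

Lemma src_edge_at j : src B j (edge_at j) = src B j (pv z j).
Proof. by rewrite /edge_at; case: eqP => [->|//]; rewrite insubd_e e_src. Qed.

Fixpoint reroute (j : nat) : 'I_(nE B j) :=
  match j with
  | 0 => edge_at 0
  | j'.+1 => if n <= j' then next_edge (rng B j' (reroute j')) else edge_at j'.+1
  end.

Lemma reroute_S j :
  reroute j.+1 = if n <= j then next_edge (rng B j (reroute j)) else edge_at j.+1.
Proof. by []. Qed.

Lemma reroute_le j : j <= n -> reroute j = edge_at j.
Proof. by case: j => [//|j] jn; rewrite reroute_S ifN // -ltnNge. Qed.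

Lemma reroute_lt j : j < n -> reroute j = pv z j.
Proof. by move=> jn; rewrite reroute_le ?(ltnW jn) // /edge_at (ltn_eqF jn). Qed.

Lemma reroute_path j : rng B j (reroute j) = src B j.+1 (reroute j.+1).
Proof.
case: (leqP n j) => h; first by rewrite reroute_S h next_edge_src.
by rewrite reroute_lt // reroute_le // src_edge_at bpathP.
Qed.

Definition rerouted : bpath B := exist _ reroute reroute_path.

Lemma rerouted_agree : agree z rerouted n.
Proof. by move=> i iN; rewrite /pv /= reroute_lt. Qed.

Lemma rerouted_n : pv rerouted n = e.
Proof. by rewrite /pv /= reroute_le // edge_at_n. Qed.

End Reroute.

Lemma conn_lift k : forall n (v w : nat) (z : bpath B), conn B n k v w ->
  nat_of_ord (vtxo n z) = v ->
  exists x, [/\ agree z x n, nat_of_ord (vtxo n x) = v & nat_of_ord (vtxo (n + k) x) = w].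
Proof.
elim: k => [|k IH] n v w z /=.
  by move=> -> hv; exists z; split => //; rewrite addn0.
move=> [e [he hc]] hv.
have hz : src B n e = vtxo n z by apply: ord_inj; rewrite he hv.
have h1 : nat_of_ord (vtxo n.+1 (rerouted hz)) = rng B n e by rewrite vtxo_S rerouted_n.
have [x [a1 a2 a3]] := IH n.+1 _ w _ hc h1.
exists x; split.
- by apply: agree_trans (rerouted_agree hz) _; exact: agree_le (leqnSn n) a1.
- by rewrite /vtxo -a1 // rerouted_n.
- by rewrite addnS -addSn.
Qed.

End Extension.

Section Stacking.
Variables (B : bratteli) (d : nat) (o : ordering B) (phi : bpath B -> bpath B)
  (f : 'I_d -> bpath B).
Hypotheses (phi_vershik : is_vershik o phi) (f_max : forall i, max_path o (f i))
  (f_inj : forall i i', peq (f i) (f i') -> i = i') (d_pos : 0 < d)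
  (B_simple : simple B).

Lemma phi_inj : injective phi.
Proof.
case: phi_vershik => -[g [_ _ gK _]] _ _ _ x y e.
by rewrite -(peq_eq (gK x)) -(peq_eq (gK y)) e.
Qed.

(* The d minimal paths are the images of the maximal ones. *)
Definition fmin i := phi (f i).

Lemma fmin_min i : min_path o (fmin i).
Proof. by case: phi_vershik => _ h _ _; exact: h. Qed.

Lemma fmin_inj i j : fmin i = fmin j -> i = j.
Proof. by move/phi_inj => e; apply: f_inj; rewrite e. Qed.

Lemma top_f i N : is_top o N (f i).
Proof. by move=> k _; exact: f_max. Qed.

Lemma base_fmin i N : is_base o N (fmin i).
Proof. by move=> k _; exact: fmin_min. Qed.

Lemma ex_separating_level : exists n0, forall i j, i != j ->
  ~ agree (f i) (f j) n0 /\ ~ agree (fmin i) (fmin j) n0.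
Proof.
pose P (p : 'I_d * 'I_d) N :=
  p.1 != p.2 -> ~ agree (f p.1) (f p.2) N /\ ~ agree (fmin p.1) (fmin p.2) N.
suff [N hN] : exists N, forall p, P p N by exists N => i j; exact: (hN (i, j)).
apply: fin_uniform_bound => [[i j] N N' le h ne|[i j]].
  by have [h1 h2] := h ne; split => a; [apply: h1 | apply: h2]; exact: agree_le le a.
case: (eqVneq i j) => [->|ne]; first by exists 0; rewrite /P eqxx.
have [N1 h1] : exists N, ~ agree (f i) (f j) N.
  apply: neq_disagree => e; suff ij : i = j by rewrite ij eqxx in ne.
  by apply: f_inj; rewrite e.
have [N2 h2] : exists N, ~ agree (fmin i) (fmin j) N.
  by apply: neq_disagree => /fmin_inj e; rewrite e eqxx in ne.
exists (maxn N1 N2) => _; split => a.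
- by apply: h1; apply: agree_le a; exact: leq_maxl.
- by apply: h2; apply: agree_le a; exact: leq_maxr.
Qed.

Lemma ex_continuity_level n0 :
  exists Kc, forall i y, agree (f i) y Kc -> agree (fmin i) (phi y) n0.
Proof.
have [[g [phi_cont _ _ _]] _ _ _] := phi_vershik.
apply: (fin_uniform_bound (P := fun i K => forall y, agree (f i) y K -> agree (fmin i) (phi y) n0)).
- by move=> i N N' le h y a; apply: h; exact: agree_le le a.
- by move=> i; have [K hK] := phi_cont (f i) n0; exists K.
Qed.

Definition i0 : 'I_d := Ordinal d_pos.
Definition xs := fmin i0.

Section Separated.
Variables (n0 Kc : nat).
Hypotheses
  (n0_sep : forall i j, i != j -> ~ agree (f i) (f j) n0 /\ ~ agree (fmin i) (fmin j) n0)
  (Kc_cont : forall i y, agree (f i) y Kc -> agree (fmin i) (phi y) n0).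

Definition N0 := maxn (maxn n0 Kc) 1.

Section Level.
Variable L : nat.
Hypotheses (L_card : nV B L = d) (L_deep : N0 <= L).

Lemma n0_L : n0 <= L.
Proof. by apply: leq_trans L_deep; rewrite /N0 leq_max leq_maxl. Qed.

Lemma Kc_L : Kc <= L.
Proof. by apply: leq_trans L_deep; rewrite /N0 leq_max leq_maxr. Qed.

Lemma L_pos : 0 < L.
Proof. by apply: leq_trans L_deep; exact: leq_maxr. Qed.

Definition vtop i := vtxo L (f i).
Definition vbot i := vtxo L (fmin i).

(* Distinct maximal (resp. minimal) paths pass through distinct vertices of
   V_L, so both maps are bijections since |V_L| = d. *)
Lemma vtop_inj : injective vtop.
Proof.
move=> i j e; apply/eqP; apply: contraT => ne; exfalso; have [h _] := n0_sep ne; apply: h.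
by apply: agree_le n0_L _; exact: top_agree (@top_f i L) (@top_f j L) e.
Qed.

Lemma vbot_inj : injective vbot.
Proof.
move=> i j e; apply/eqP; apply: contraT => ne; exfalso; have [_ h] := n0_sep ne; apply: h.
by apply: agree_le n0_L _; exact: base_agree (@base_fmin i L) (@base_fmin j L) e.
Qed.

Lemma card_V_L : #|'I_(nV B L)| <= #|'I_d|.
Proof. by rewrite !card_ord L_card. Qed.

Lemma vbot_onto v : exists i, vbot i = v.
Proof. by have /codomP[i ->] := inj_card_onto vbot_inj card_V_L v; exists i. Qed.

Definition itop v := odflt i0 [pick i | vtop i == v].

Lemma vtop_itop v : vtop (itop v) = v.
Proof.
rewrite /itop; case: pickP => [i /eqP //|none].
have /codomP[i hi] := inj_card_onto vtop_inj card_V_L v.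
by have := none i; rewrite -hi eqxx.
Qed.

Definition rho v := vbot (itop v).

Lemma rho_inj : injective rho.
Proof. by move=> u u' /vbot_inj e; rewrite -(vtop_itop u) e vtop_itop. Qed.

(* phi maps a top path through v to a base path through [rho v]: the top
   path agrees with the maximal path through v up to L >= Kc, so its image
   is n0-close, hence equal at level L, to the corresponding minimal path. *)
Lemma vershik_top_vertex x : is_top o L x -> vtxo L (phi x) = rho (vtxo L x).
Proof.
move=> tx; set i := itop (vtxo L x).
have a1 : agree (f i) x L.
  exact: top_agree (@top_f _ L) tx (vtop_itop _).
have a2 := Kc_cont (agree_le Kc_L a1).
have [j hj] := vbot_onto (vtxo L (phi x)).
have a3 : agree (fmin j) (phi x) L.
  exact: base_agree (@base_fmin j L) (vershik_top phi_vershik tx) hj.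
suff ij : i = j by rewrite -hj /rho -/i ij.
apply/eqP; apply: contraT => ne; exfalso; have [_ h] := n0_sep ne; apply: h.
by apply: agree_trans a2 _; apply: agree_sym; exact: agree_le n0_L a3.
Qed.

Lemma vertex_step y : fconnect rho (vtxo L y) (vtxo L (phi y)).
Proof.
case: (classic (is_top o L y)) => [t|nt].
- by rewrite (vershik_top_vertex t); exact: fconnect1.
- by rewrite (vershik_not_top phi_vershik nt).1; exact: connect0.
Qed.

Lemma climb m : L < m -> forall t y, height (vtxo m y) = (tower_pos o m y + t).+1 ->
  exists z, [/\ vtxo m z = vtxo m y, is_top o m z &
              fconnect rho (vtxo L y) (vtxo L z)].
Proof.
move=> Lm; elim=> [|t IH] y e.
  exists y; split; [by [] | | exact: connect0].
  by apply: (top_of_tower_pos phi_vershik); rewrite e addn0.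
have nt : ~ is_top o m y.
  move=> t'; move: e; rewrite -(tower_pos_top t') => /succn_inj /eqP.
  by rewrite -{1}(addn0 (tower_pos o m y)) eqn_add2l.
have [e1 e2] := vershik_not_top phi_vershik nt.
have e' : height (vtxo m (phi y)) = (tower_pos o m (phi y) + t).+1.
  by rewrite e1 e2 e addSnnS.
have [z [z1 z2 z3]] := IH _ e'.
exists z; split => //; first by rewrite z1 e1.
exact: connect_trans (vertex_step y) z3.
Qed.

(* rho is a single cycle: by simplicity there is a level m > L whose every
   vertex is reachable from every vertex of V_L, and climbing from any vertex
   of V_L to the top of the tower over a fixed vertex of V_m always ends at
   the same path segment. *)
Lemma rho_cycle v : fconnect rho (vtxo L xs) v.
Proof.
have [m [Lm hc]] := B_simple L.
set w := vtxo m xs.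
have through u : exists x, vtxo L x = u /\ vtxo m x = w.
  have hz : nat_of_ord (vtxo L (f (itop u))) = u by rewrite -/(vtop _) vtop_itop.
  have [x [_ a2 a3]] := conn_lift (hc u w) hz.
  by exists x; split; apply: ord_inj; rewrite // -a3 subnKC // ltnW.
have to_top u : exists z, [/\ vtxo m z = w, is_top o m z & fconnect rho u (vtxo L z)].
  have [x [<- xw]] := through u.
  have e : height (vtxo m x) = (tower_pos o m x + (height (vtxo m x) - (tower_pos o m x).+1)).+1.
    by rewrite -addSn subnKC // tower_pos_lt.
  have [z [z1 z2 z3]] := climb Lm e.
  by exists z; rewrite z1 xw.
have [z1 [a1 a2 a3]] := to_top v.
have [z2 [b1 b2 b3]] := to_top (vtxo L xs).
have same : vtxo L z1 = vtxo L z2.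
  by apply: agree_vtxo L_pos _; apply: agree_le (ltnW Lm) (top_agree a2 b2 _); rewrite a1 b1.
by apply: connect_trans b3 _; rewrite -same (fconnect_sym rho_inj).
Qed.

(* Stacking the towers in the rho-order starting from vtxo L xs gives a
   single tower of height [stack_height]; [stack_pos x] is the floor of x. *)
Definition vstar := vtxo L xs.
Definition ntowers := order rho vstar.
Definition tower_height t := height (iter t rho vstar).
Definition stack_base v := \sum_(t < findex rho vstar v) tower_height t.
Definition stack_height := \sum_(t < ntowers) tower_height t.
Definition stack_pos x := stack_base (vtxo L x) + tower_pos o L x.

Lemma findex_lt v : findex rho vstar v < ntowers.
Proof. exact: findex_max (rho_cycle v). Qed.

Lemma iter_findex_vstar v : iter (findex rho vstar v) rho vstar = v.
Proof. exact: iter_findex (rho_cycle v). Qed.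

Lemma stack_base_add v :
  stack_base v + height v = \sum_(t < (findex rho vstar v).+1) tower_height t.
Proof. by rewrite big_ord_recr /= /tower_height iter_findex_vstar. Qed.

Lemma stack_pos_mono x y :
  findex rho vstar (vtxo L x) < findex rho vstar (vtxo L y) -> stack_pos x < stack_pos y.
Proof.
move=> lt; apply: (@leq_trans (stack_base (vtxo L x) + height (vtxo L x))).
  by rewrite ltn_add2l tower_pos_lt.
by apply: leq_trans (leq_addr _ _); rewrite stack_base_add; exact: sum_prefix.
Qed.

Lemma stack_pos_lt x : stack_pos x < stack_height.
Proof.
apply: (@leq_trans (stack_base (vtxo L x) + height (vtxo L x))).
  by rewrite ltn_add2l tower_pos_lt.
by rewrite stack_base_add; apply: sum_prefix; exact: findex_lt.
Qed.

Lemma stack_height_pos : 0 < stack_height.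
Proof. exact: leq_ltn_trans (leq0n _) (stack_pos_lt xs). Qed.

Lemma stack_pos_xs : stack_pos xs = 0.
Proof.
by rewrite /stack_pos -/vstar /stack_base findex0 big_ord0 (tower_pos_base (@base_fmin i0 L)).
Qed.

Lemma stack_pos_loc x y : agree x y L -> stack_pos x = stack_pos y.
Proof. by move=> a; rewrite /stack_pos (agree_vtxo L_pos a) (tower_pos_agree o a). Qed.

Lemma stack_pos_inj x y : stack_pos x = stack_pos y -> agree x y L.
Proof.
move=> e.
have ev : vtxo L x = vtxo L y.
  have ef : findex rho vstar (vtxo L x) = findex rho vstar (vtxo L y).
    by apply/eqP; apply: contraT; rewrite neq_ltn => /orP[] /stack_pos_mono; rewrite e ltnn.
  by rewrite -(iter_findex_vstar (vtxo L x)) ef iter_findex_vstar.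
apply: (tower_pos_inj (o := o)) => //.
by move: e; rewrite /stack_pos ev; exact: addnI.
Qed.

Lemma stack_pos_phi_top x : is_top o L x -> stack_pos (phi x) = (stack_pos x + 1) %% stack_height.
Proof.
move=> t; have r1 := tower_pos_top t; have r2 := tower_pos_base (vershik_top phi_vershik t).
have v2 := vershik_top_vertex t.
rewrite /stack_pos r2 v2 addn0.
set v := vtxo L x in r1 v2 *; set i := findex rho vstar v.
have rho_v : rho v = iter i.+1 rho vstar by rewrite iterS /i iter_findex_vstar.
have sum_i : stack_pos x + 1 = \sum_(t < i.+1) tower_height t.
  by rewrite /stack_pos -/v addn1 -addnS r1 stack_base_add.
case: (ltngtP i.+1 ntowers) => [lt|gt|eq_o].
- have e : stack_base (rho v) = stack_pos x + 1.
    by rewrite /stack_base rho_v (findex_iter lt) sum_i.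
  by rewrite e modn_small // -e -[stack_base _]addn0 -r2 -v2; exact: stack_pos_lt.
- by move: gt; rewrite ltnNge findex_lt.
- have e : rho v = vstar by rewrite rho_v eq_o iter_order //; exact: rho_inj.
  by rewrite e /stack_base findex0 big_ord0 sum_i eq_o modnn.
Qed.

Lemma stack_pos_phi x : stack_pos (phi x) = (stack_pos x + 1) %% stack_height.
Proof.
case: (classic (is_top o L x)) => [t|nt]; first exact: stack_pos_phi_top.
have [e1 e2] := vershik_not_top phi_vershik nt.
have e : stack_pos (phi x) = stack_pos x + 1 by rewrite /stack_pos e1 e2 addn1 addnS.
by rewrite -e modn_small // stack_pos_lt.
Qed.

End Level.

(* Along a strictly increasing sequence of deep levels with d vertices, the
   stacked positions satisfy the conjugacy criterion (level 0 is the trivial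
   one-floor stack). *)
Theorem conj_odometer_of_levels (K : nat -> nat) :
  (forall n, nV B (K n) = d) -> (forall n, N0 <= K n) -> (forall n, K n < K n.+1) ->
  conj_to_odometer phi.
Proof.
move=> K_card K_deep K_inc.
have [Ti [_ _ _ TiK]] : homeo phi by case: phi_vershik.
have K_gt n : n < K n.
  elim: n => [|n IH]; last exact: leq_ltn_trans IH (K_inc n).
  by apply: leq_trans (K_deep 0); exact: leq_maxr.
apply: (@conj_odometer_of_positions B phi Ti
  (fun n => if n is m.+1 then stack_height (K m) else 1)
  (fun n => if n is m.+1 then K m else 0)
  (fun n x => if n is m.+1 then stack_pos (K m) x else 0) xs) => //.
- by move=> x; apply: peq_eq.
- by case=> // n; exact: (stack_height_pos (K_card n) (K_deep n)).
- by case=> // n x; exact: (stack_pos_lt (K_card n) (K_deep n) x).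
- by case=> // n x; exact: (stack_pos_phi (K_card n) (K_deep n) x).
- by case=> // n x y a; exact: (stack_pos_loc (K_deep n) a).
- by case=> // n x y e; exact: (stack_pos_inj (K_card n) (K_deep n) e).
- by case=> // n; exact: stack_pos_xs.
- by case=> // n; exact: ltnW (K_inc n).
- by case=> // n; exact: K_gt.
Qed.

End Separated.
End Stacking.

Lemma ex_increasing_seq (P : pred nat) (N : nat) :
  (forall M, exists L, M <= L /\ P L) ->
  exists K : nat -> nat, [/\ forall n, P (K n), forall n, N <= K n & forall n, K n < K n.+1].
Proof.
move=> unbounded.
have ex M : exists L, (M <= L) && P L.
  by have [L [h1 h2]] := unbounded M; exists L; rewrite h1 h2.
pose next M := xchoose (ex M).
have next_ge M : M <= next M by have /andP[] := xchooseP (ex M).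
have next_P M : P (next M) by have /andP[] := xchooseP (ex M).
exists (fun n => iter n (fun M => next M.+1) (next N)); split => [n|n|n].
- by case: n => [|n] /=; exact: next_P.
- elim: n => [|n IH] /=; first exact: next_ge.
  exact: leq_trans IH (ltnW (next_ge _)).
- exact: next_ge.
Qed.

Theorem mainTheorem14 (B : bratteli) (d : nat) (o : ordering B)
  (phi : bpath B -> bpath B) :
  aperiodic B -> simple B -> has_rank B d -> 2 <= d ->
  perfect o -> n_max_paths o d -> is_vershik o phi ->
  conj_to_odometer phi.
Proof.
move=> _ B_simple [_ d_often _] d2 _ [f [f_max f_inj _]] phi_vershik.
have d_pos : 0 < d := ltnW d2.
have [n0 n0_sep] := ex_separating_level phi_vershik f_inj.
have [Kc Kc_cont] := ex_continuity_level f phi_vershik n0.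
have d_levels M : exists L, M <= L /\ nV B L == d.
  by have [L [ML hL]] := d_often M; exists L; rewrite hL eqxx.
have [K [K_card K_deep K_inc]] := ex_increasing_seq (N0 n0 Kc) d_levels.
apply: (conj_odometer_of_levels phi_vershik f_max d_pos B_simple n0_sep Kc_cont
  (K := K)) => // n; exact/eqP.
Qed.
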